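(* Consider the FlexPD-G iterates described in the context with $\alpha,\beta>0$ and integer $T\ge1$. For any $\bar d,\bar c,\bar g,\bar e>1$ and every $k\ge0$, \[\|\lambda^{k+1}-\lambda^*\|^2\le\frac{\bar d\bar c}{\alpha^2 s(AA')}\Big(\bar g+\frac{\bar g\alpha^2L^2}{\bar g-1}\Big)\|x^{k+1,T}-x^{k+1,T-1}\|^2+\frac{\bar d\bar c}{s(AA')(\bar c-1)}\Big(\bar e\beta^2\rho^2(A'A)+\frac{\bar eL^2}{\bar e-1}\Big)\|x^{k+1,T}-x^*\|^2+\frac{\bar d\rho^2(B)}{s(AA')(\bar d-1)}\|x^k-x^*\|^2.\]
   Context: Setting: $n$ agents are connected by a connected undirected graph with edge set $\mathcal E$, $\epsilon=|\mathcal E|$. For $x\in\mathbb R^n$ let $f(x)=\sum_{i=1}^n f_i(x_i)$, where each $f_i:\mathbb R\to\mathbb R$ is twice differentiable with $m\le f_i''\le L$ for constants $0<m\le L$; $\nabla f(x)=(f_1'(x_1),\dots,f_n'(x_n))'$. $A\in\mathbb R^{\epsilon\times n}$ is the edge–node incidence matrix (null space spanned by the all-ones vector). $B\in\mathbb R^{n\times n}$ is symmetric positive semidefinite with the same null space as $A$, off-diagonal entries nonzero only on edges, and $\rho(B)<m$. $x^*$ is the unique minimizer of $f$ subject to $Ax=0$ and $\lambda^*$ a Lagrange multiplier with $\nabla f(x^* )+A'\lambda^*=0$, $Ax^*=0$, $Bx^*=0$, chosen in the column space of $A$ (orthogonal to the null space of $A'$). FlexPD-G: given $\alpha,\beta>0$,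 $T\ge1$, $x^0$ arbitrary, $\lambda^0=0$; for $k\ge0$: $x^{k+1,0}=x^k$; for $t=1,\dots,T$, $x^{k+1,t}=x^{k+1,t-1}-\alpha\nabla f(x^{k+1,t-1})-\alpha A'\lambda^k-\alpha Bx^k$; then $x^{k+1}=x^{k+1,T}$, $\lambda^{k+1}=\lambda^k+\beta Ax^{k+1}$. Notation: $\rho(S)$ largest eigenvalue of symmetric $S$; $s(AA')$ smallest nonzero eigenvalue of $AA'$; $\|\cdot\|$ Euclidean norm. *)

From HB Require Import structures.
From mathcomp Require Import all_boot all_order all_algebra.
From mathcomp Require Import all_classical all_reals all_analysis.
Set Implicit Arguments. Unset Strict Implicit. Unset Printing Implicit Defensive.
Import Order.TTheory GRing.Theory Num.Theory.
Local Open Scope ring_scope.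
Local Open Scope classical_set_scope.

Section Defs.
Variable R : realType.

Definition enorm (p : nat) (v : 'cV[R]_p) : R := Num.sqrt (\sum_i (v i 0) ^+ 2).

Definition max_eig (p : nat) (S : 'M[R]_p) : R := sup [set a | eigenvalue S a].

Definition min_nz_eig (p : nat) (S : 'M[R]_p) : R :=
  inf [set a | eigenvalue S a /\ a != 0].

Definition adj (n eps : nat) (ends : 'I_eps -> 'I_n * 'I_n) : rel 'I_n :=
  fun i j => [exists e, (ends e == (i, j)) || (ends e == (j, i))].

(* A is the edge-node incidence matrix of the graph given by ends
   (each edge e = (i,j) oriented arbitrarily: +1 at i, -1 at j) *)
Definition incidence (n eps : nat) (ends : 'I_eps -> 'I_n * 'I_n) : 'M[R]_(eps, n) :=
  \matrix_(e, i) ((i == (ends e).1)%:R - (i == (ends e).2)%:R).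

Definition fsum (n : nat) (f : 'I_n -> R -> R) (x : 'cV[R]_n) : R :=
  \sum_i f i (x i 0).
Definition grad (n : nat) (f : 'I_n -> R -> R) (x : 'cV[R]_n) : 'cV[R]_n :=
  \col_i derive1 (f i) (x i 0).

(* FlexPD-G inner loop: x^{k+1,t} computed from x^k, lambda^k *)
Fixpoint flex_inner (n eps : nat) (f : 'I_n -> R -> R) (A : 'M[R]_(eps, n))
   (B : 'M[R]_n) (alpha : R) (xk : 'cV[R]_n) (lk : 'cV[R]_eps) (t : nat) : 'cV[R]_n :=
  match t with
  | 0 => xk
  | t'.+1 => let y := flex_inner f A B alpha xk lk t' in
      y - alpha *: grad f y - alpha *: (A^T *m lk) - alpha *: (B *m xk)
  end.

Fixpoint flex_outer (n eps : nat) (f : 'I_n -> R -> R) (A : 'M[R]_(eps, n))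
   (B : 'M[R]_n) (alpha beta : R) (T : nat) (x0 : 'cV[R]_n) (k : nat)
   : 'cV[R]_n * 'cV[R]_eps :=
  match k with
  | 0 => (x0, 0)
  | k'.+1 => let p := flex_outer f A B alpha beta T x0 k' in
      let x' := flex_inner f A B alpha p.1 p.2 T in
      (x', p.2 + beta *: (A *m x'))
  end.
End Defs.

(* Write u = lambda^{k+1} - lambda*.  Both multipliers lie in the range of A
   (lambda^0 = 0 and every dual step adds beta A x), hence so does u, and then
   s(AA') |u|^2 <= |A'u|^2.  The last inner step together with the optimality
   conditions A x* = 0, B x* = 0 and A'lambda* = -grad f at x* gives
     A'u = (-(x^{k+1,T} - x^{k+1,T-1}) / alpha + (g^{k+1,T} - g^{k+1,T-1}))
         + (beta A'A (x^{k+1,T} - x* ) - (g^{k+1,T} - g* ))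
         - B (x^k - x* ),
   with g = grad f at the corresponding point.  The bound follows by splitting
   this sum three times with |a + b|^2 <= c|a|^2 + c/(c-1) |b|^2 (for d, then c,
   then g and e), using that grad f is L-Lipschitz and |S v| <= rho(S) |v| for
   symmetric PSD S.
   The spectral facts are obtained without a spectral theorem: the supremum of
   the Rayleigh quotient of S, and its infimum on an S-invariant subspace, are
   eigenvalues, because a symmetric matrix that is PSD on an invariant subspace U
   and has arbitrarily small Rayleigh quotients there cannot be injective on U. *)

From HB Require Import structures.
From mathcomp Require Import all_boot all_order all_algebra.
From mathcomp Require Import all_classical all_reals all_analysis.
From mathcomp.algebra_tactics Require Import ring lra.
Import Order.TTheory GRing.Theory Num.Theory.
Local Open Scope ring_scope.

Set Implicit Arguments.
Unset Strict Implicit.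
Unset Printing Implicit Defensive.

Section SquaredNorm.
Variable R : realType.

Definition sqnorm p q (X : 'M[R]_(p, q)) := \sum_i \sum_j X i j ^+ 2.

Lemma sqnorm_ge0 p q (X : 'M[R]_(p, q)) : 0 <= sqnorm X.
Proof. by do 2![apply: sumr_ge0 => ? _]; apply: sqr_ge0. Qed.

Lemma sqnorm_eq0 p q (X : 'M[R]_(p, q)) : (sqnorm X == 0) = (X == 0).
Proof.
apply/idP/eqP => [/eqP X0|->]; last first.
  by apply/eqP; do 2![apply: big1 => ? _]; rewrite mxE expr0n.
have row_ge0 k : true -> 0 <= \sum_l X k l ^+ 2.
  by move=> _; apply: sumr_ge0 => l _; apply: sqr_ge0.
apply/matrixP => i j; rewrite mxE; apply/eqP; rewrite -sqrf_eq0; apply/eqP.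
have Xi0 := @psumr_eq0P _ _ _ _ row_ge0 X0 i isT.
exact: @psumr_eq0P _ _ _ _ (fun l _ => sqr_ge0 (X i l)) Xi0 j isT.
Qed.

Lemma sqnorm_gt0 p q (X : 'M[R]_(p, q)) : (0 < sqnorm X) = (X != 0).
Proof. by rewrite lt_def sqnorm_eq0 sqnorm_ge0 andbT. Qed.

Lemma sqnorm0 p q : sqnorm (0 : 'M[R]_(p, q)) = 0.
Proof. by apply/eqP; rewrite sqnorm_eq0. Qed.

Lemma sqnormZ p q a (X : 'M[R]_(p, q)) : sqnorm (a *: X) = a ^+ 2 * sqnorm X.
Proof.
rewrite /sqnorm mulr_sumr; apply: eq_bigr => i _; rewrite mulr_sumr.
by apply: eq_bigr => j _; rewrite mxE exprMn.
Qed.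

Lemma sqnormN p q (X : 'M[R]_(p, q)) : sqnorm (- X) = sqnorm X.
Proof. by rewrite -scaleN1r sqnormZ sqrrN expr1n mul1r. Qed.

Lemma sqnorm_tr p q (X : 'M[R]_(p, q)) : sqnorm X^T = sqnorm X.
Proof.
by rewrite /sqnorm exchange_big; do 2![apply: eq_bigr => ? _]; rewrite mxE.
Qed.

Lemma sqnorm_row p (u : 'rV[R]_p) : sqnorm u = (u *m u^T) 0 0.
Proof.
by rewrite /sqnorm big_ord1 mxE; apply: eq_bigr => j _; rewrite mxE expr2.
Qed.

Lemma sqnorm_col p (v : 'cV[R]_p) : sqnorm v = \sum_i v i 0 ^+ 2.
Proof. by apply: eq_bigr => i _; rewrite big_ord1. Qed.

Lemma enorm_sqr p (v : 'cV[R]_p) : enorm v ^+ 2 = sqnorm v.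
Proof. by rewrite /enorm sqr_sqrtr -sqnorm_col ?sqnorm_ge0. Qed.

Lemma sqrD_le_weighted (c x y : R) : 1 < c ->
  (x + y) ^+ 2 <= c * x ^+ 2 + c / (c - 1) * y ^+ 2.
Proof.
move=> c_gt1; have c1_neq0 : c - 1 != 0 by rewrite subr_eq0 gt_eqF.
have -> : c * x ^+ 2 + c / (c - 1) * y ^+ 2
          = (x + y) ^+ 2 + ((c - 1) * x - y) ^+ 2 / (c - 1) by field.
by rewrite lerDl divr_ge0 ?sqr_ge0 ?subr_ge0 ?ltW.
Qed.

Lemma sqnormD_le (c : R) p q (X Y : 'M[R]_(p, q)) a b : 1 < c ->
  sqnorm X <= a -> sqnorm Y <= b -> sqnorm (X + Y) <= c * a + c / (c - 1) * b.
Proof.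
move=> c_gt1 Xa Yb; apply: (@le_trans _ _ (c * sqnorm X + c / (c - 1) * sqnorm Y)).
  rewrite /sqnorm !mulr_sumr -big_split; apply: ler_sum => i _.
  rewrite !mulr_sumr -big_split; apply: ler_sum => j _.
  by rewrite mxE; apply: sqrD_le_weighted.
have c_ge0 : 0 <= c by lra.
have cc1_ge0 : 0 <= c / (c - 1) by apply: divr_ge0; lra.
by apply: lerD; apply: ler_wpM2l.
Qed.

Lemma quadratic_ge0_discr (a b c : R) : 0 <= c ->
  (forall t, 0 <= a + 2 * b * t + c * t ^+ 2) -> b ^+ 2 <= a * c.
Proof.
move=> c_ge0 quad_ge0; have [c0|c_neq0] := eqVneq c 0.
  have [b0|b_neq0] := eqVneq b 0; first by rewrite b0 c0; lra.
  have := quad_ge0 (- (a + 1) / (2 * b)); rewrite c0 mul0r addr0.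
  have -> : 2 * b * (- (a + 1) / (2 * b)) = - (a + 1) by field; rewrite b_neq0.
  lra.
have c_gt0 : 0 < c by rewrite lt_def c_neq0.
have := quad_ge0 (- b / c).
have -> : a + 2 * b * (- b / c) + c * (- b / c) ^+ 2 = (a * c - b ^+ 2) / c.
  by field.
by rewrite pmulr_lge0 ?invr_gt0 // subr_ge0.
Qed.

Lemma CauchySchwarz_sum p (x y : 'I_p -> R) :
  (\sum_i x i * y i) ^+ 2 <= (\sum_i x i ^+ 2) * (\sum_i y i ^+ 2).
Proof.
apply: quadratic_ge0_discr => [|t]; first by apply: sumr_ge0 => i _; apply: sqr_ge0.
rewrite [2 * _ * t]mulrAC mulr_sumr mulr_suml -!big_split /=.
by apply: sumr_ge0 => i _; rewrite (_ : _ + _ = (x i + t * y i) ^+ 2) ?sqr_ge0 //; ring.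
Qed.

Lemma sqnorm_mulmx_le p q r (X : 'M[R]_(p, q)) (Y : 'M[R]_(q, r)) :
  sqnorm (X *m Y) <= sqnorm X * sqnorm Y.
Proof.
rewrite /sqnorm mulr_suml; apply: ler_sum => i _.
rewrite /sqnorm exchange_big mulr_sumr; apply: ler_sum => k _.
by rewrite mxE; apply: CauchySchwarz_sum.
Qed.

End SquaredNorm.

Section QuadraticForm.
Variable R : realType.

Definition qform p (M : 'M[R]_p) (u v : 'rV[R]_p) := (u *m M *m v^T) 0 0.

Lemma qformC p (M : 'M[R]_p) u v : M^T = M -> qform M v u = qform M u v.
Proof.
move=> M_sym; rewrite /qform.
have -> : v *m M *m u^T = (u *m M *m v^T)^T by rewrite !trmx_mul trmxK M_sym mulmxA.
by rewrite mxE.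
Qed.

Lemma qform_line p (M : 'M[R]_p) u v t : M^T = M ->
  qform M (u + t *: v) (u + t *: v)
  = qform M u u + 2 * qform M u v * t + qform M v v * t ^+ 2.
Proof.
move=> M_sym; have vu := qformC u v M_sym; move: vu.
rewrite /qform linearD /= linearZ /= !mulmxDl !mulmxDr -!scalemxAl -!scalemxAr.
by rewrite !mxE => ->; ring.
Qed.

Lemma qformB p (M N : 'M[R]_p) u v : qform (M - N) u v = qform M u v - qform N u v.
Proof. by rewrite /qform mulmxBr mulmxBl !mxE. Qed.

Lemma qform_scalar p a (u : 'rV[R]_p) : qform a%:M u u = a * sqnorm u.
Proof. by rewrite /qform mul_mx_scalar -scalemxAl mxE sqnorm_row. Qed.

Lemma qform_eigen p (M : 'M[R]_p) a v : v *m M = a *: v -> qform M v v = a * sqnorm v.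
Proof. by rewrite /qform => ->; rewrite -scalemxAl mxE sqnorm_row. Qed.

Lemma qform_image p (M : 'M[R]_p) u : qform M u (u *m M) = sqnorm (u *m M).
Proof. by rewrite sqnorm_row. Qed.

Lemma qform_le_sqnorm p (M : 'M[R]_p) u : qform M u u <= (sqnorm M + 1) / 2 * sqnorm u.
Proof.
have AM_GM : qform M u u <= (sqnorm (u *m M) + sqnorm u) / 2.
  rewrite /qform /sqnorm mxE !big_ord1 -big_split /= mulr_suml; apply: ler_sum => j _.
  rewrite [u^T j 0]mxE; have := sqr_ge0 ((u *m M) 0 j - u 0 j); lra.
have := sqnorm_mulmx_le u M; have := sqnorm_ge0 u; lra.
Qed.

Section InvariantSubspace.
Variables (p q : nat) (M : 'M[R]_p) (U : 'M[R]_(q, p)).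
Hypotheses (M_sym : M^T = M) (U_stable : stablemx U M).
Hypothesis M_psd : forall u : 'rV[R]_p, (u <= U)%MS -> 0 <= qform M u u.

Lemma qform_CauchySchwarz (u v : 'rV[R]_p) : (u <= U)%MS -> (v <= U)%MS ->
  qform M u v ^+ 2 <= qform M u u * qform M v v.
Proof.
move=> uU vU; apply: quadratic_ge0_discr => [|t]; first exact: M_psd.
by rewrite -qform_line //; apply/M_psd/addmx_sub/scalemx_sub.
Qed.

Lemma sqnorm_mulmx_le_qform (u : 'rV[R]_p) a : (u <= U)%MS -> 0 <= a ->
  qform M (u *m M) (u *m M) <= a * sqnorm (u *m M) ->
  sqnorm (u *m M) <= a * qform M u u.
Proof.
move=> uU a_ge0 image_le; set w := u *m M.
have wU : (w <= U)%MS by apply: submx_trans (submxMr M uU) U_stable.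
have [w0|wnz] := eqVneq w 0; first by rewrite w0 sqnorm0 mulr_ge0 ?M_psd.
have CS := qform_CauchySchwarz uU wU; rewrite qform_image -/w in CS.
have : sqnorm w * sqnorm w <= a * qform M u u * sqnorm w.
  by rewrite -expr2 (le_trans CS) //; have := M_psd uU; nra.
by rewrite ler_pM2r ?sqnorm_gt0.
Qed.

Lemma qform_coercive (X : 'M[R]_p) :
  (forall u : 'rV[R]_p, (u <= U)%MS -> u *m M *m X = u) ->
  exists2 c, 0 < c & forall u : 'rV[R]_p, (u <= U)%MS -> c * sqnorm u <= qform M u u.
Proof.
move=> MX; pose a := (sqnorm M + 1) / 2.
have a_ge0 : 0 <= a by rewrite /a; have := sqnorm_ge0 M; lra.
have X_ge0 := sqnorm_ge0 X.
exists (1 / (sqnorm X * a + 1)); first by rewrite divr_gt0 //; nra.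
move=> u uU; rewrite mul1r ler_pdivrMl; last by nra.
have image_le := sqnorm_mulmx_le_qform uU a_ge0 (qform_le_sqnorm _ _).
have := sqnorm_mulmx_le (u *m M) X; rewrite MX //.
have := M_psd uU; have := sqnorm_ge0 (u *m M); nra.
Qed.

Lemma rayleigh_inf0_kernel :
  (forall e, 0 < e -> exists u : 'rV[R]_p,
     [/\ (u <= U)%MS, u != 0 & qform M u u < e * sqnorm u]) ->
  exists w : 'rV[R]_p, [/\ (w <= U)%MS, w != 0 & w *m M = 0].
Proof.
move=> small; apply: contrapT => no_kernel.
have M_inj (w : 'rV[R]_p) : (w <= U)%MS -> w *m M = 0 -> w = 0.
  by move=> wU wM; apply: contrapT => /eqP wnz; apply: no_kernel; exists w.
(* Being injective on the invariant subspace U, M is inverted there by this matrix. *)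
have MX (u : 'rV[R]_p) : (u <= U)%MS -> u *m M *m (pinvmx (U *m M) *m U) = u.
  move=> uU; set y := u *m M *m pinvmx (U *m M).
  have yUM : y *m (U *m M) = u *m M by rewrite mulmxKpV // submxMr.
  have /M_inj : (y *m U - u <= U)%MS by rewrite addmx_sub ?submxMl ?eqmx_opp.
  rewrite mulmxBl -[y *m U *m M]mulmxA yUM subrr => /(_ erefl)/eqP.
  by rewrite subr_eq0 mulmxA => /eqP.
have [c c_gt0 coercive] := qform_coercive MX.
have [u [uU unz small_u]] := small c c_gt0.
by have := coercive u uU; rewrite leNgt small_u.
Qed.

End InvariantSubspace.

Lemma eigenvalue_kernel p (M : 'M[R]_p) a (w : 'rV[R]_p) :
  w != 0 -> w *m (M - a%:M) = 0 -> eigenvalue M a.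
Proof.
move=> wnz /eqP wMa; apply/eigenvalueP; exists w => //.
by apply/eqP; rewrite -subr_eq0 -mul_mx_scalar -mulmxBr.
Qed.

Lemma qform_le_max_eig p (M : 'M[R]_p) (u : 'rV[R]_p) : M^T = M ->
  qform M u u <= max_eig M * sqnorm u.
Proof.
move=> M_sym; have [->|unz] := eqVneq u 0.
  by rewrite sqnorm0 mulr0 /qform !mul0mx mxE.
pose S := [set qform M v v / sqnorm v | v in [set v : 'rV[R]_p | v != 0]]%classic.
have S_sup : has_sup S.
  split; first by exists (qform M u u / sqnorm u), u.
  exists ((sqnorm M + 1) / 2) => _ [v /= vnz <-].
  by rewrite ler_pdivrMr ?sqnorm_gt0 ?qform_le_sqnorm.
have rayleigh v : qform M v v <= sup S * sqnorm v.
  have [->|vnz] := eqVneq v 0; first by rewrite sqnorm0 mulr0 /qform !mul0mx mxE.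
  by rewrite -ler_pdivrMr ?sqnorm_gt0 //; apply: sup_upper_bound => //; exists v.
have [w [_ wnz wP]] :
    exists w : 'rV[R]_p, [/\ (w <= 1%:M)%MS, w != 0 & w *m ((sup S)%:M - M) = 0].
  apply: rayleigh_inf0_kernel => [||v _|e e_gt0].
  - by rewrite linearB /= tr_scalar_mx M_sym.
  - exact: submx1.
  - by rewrite qformB qform_scalar subr_ge0.
  have [_ [v /= vnz <-] lt_v] := sup_adherent e_gt0 S_sup.
  exists v; split; rewrite ?submx1 // qformB qform_scalar.
  by move: lt_v; rewrite ltr_pdivlMr ?sqnorm_gt0 // mulrBl; lra.
have sup_eig : eigenvalue M (sup S).
  by apply: eigenvalue_kernel wnz _; rewrite -opprB mulmxN wP oppr0.
have eig_le a : eigenvalue M a -> a <= sup S.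
  move=> /eigenvalueP [v va vnz].
  by have := rayleigh v; rewrite (qform_eigen va) ler_pM2r ?sqnorm_gt0.
have sup_le : sup S <= max_eig M.
  by apply: sup_upper_bound => //; split; [exists (sup S) | exists (sup S)].
by apply: le_trans (rayleigh u) _; rewrite ler_wpM2r ?sqnorm_ge0.
Qed.

Lemma sqnorm_mulmx_le_max_eig p (M : 'M[R]_p) (u : 'rV[R]_p) : M^T = M ->
  (forall v, 0 <= qform M v v) -> sqnorm (u *m M) <= max_eig M ^+ 2 * sqnorm u.
Proof.
move=> M_sym M_psd; have [->|unz] := eqVneq u 0; first by rewrite mul0mx !sqnorm0 mulr0.
have rho_ge0 : 0 <= max_eig M.
  have u_gt0 : 0 < sqnorm u by rewrite sqnorm_gt0.
  rewrite -(pmulr_lge0 _ u_gt0).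
  exact: le_trans (M_psd u) (qform_le_max_eig u M_sym).
have image_le := sqnorm_mulmx_le_qform M_sym (submx1 _) (fun v _ => M_psd v)
  (submx1 u) rho_ge0 (qform_le_max_eig _ M_sym).
apply: le_trans image_le _.
by rewrite expr2 -mulrA ler_wpM2l ?qform_le_max_eig.
Qed.

Lemma sqnorm_mulmx_col_le_max_eig p (M : 'M[R]_p) (v : 'cV[R]_p) : M^T = M ->
  (forall u, 0 <= qform M u u) -> sqnorm (M *m v) <= max_eig M ^+ 2 * sqnorm v.
Proof.
move=> M_sym M_psd.
by rewrite -sqnorm_tr trmx_mul M_sym -(sqnorm_tr v) sqnorm_mulmx_le_max_eig.
Qed.

Section Gram.
Variables (q p : nat) (C : 'M[R]_(q, p)).

Lemma gram_sym : (C^T *m C)^T = C^T *m C.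
Proof. by rewrite trmx_mul trmxK. Qed.

Lemma qform_gram u : qform (C^T *m C) u u = sqnorm (u *m C^T).
Proof. by rewrite /qform sqnorm_row trmx_mul trmxK !mulmxA. Qed.

Lemma sub_mulmx_tr_eq0 (w : 'rV[R]_p) : (w <= C)%MS -> w *m C^T = 0 -> w = 0.
Proof.
move=> /mulmxKpV <-; set z := w *m pinvmx C => zCC; apply/eqP.
by rewrite -sqnorm_eq0 sqnorm_row trmx_mul !mulmxA zCC mul0mx mxE.
Qed.

Lemma sub_gram_eigen (v : 'rV[R]_p) a : a != 0 -> v *m (C^T *m C) = a *: v -> (v <= C)%MS.
Proof.
move=> a_neq0 va; have -> : v = a^-1 *: (v *m (C^T *m C)).
  by rewrite va scalerA mulVf // scale1r.
by rewrite scalemx_sub // mulmxA submxMl.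
Qed.

Lemma gram_eigenvalue_ge0 a : eigenvalue (C^T *m C) a -> 0 <= a.
Proof.
move=> /eigenvalueP [v va vnz]; have v_gt0 : 0 < sqnorm v by rewrite sqnorm_gt0.
by rewrite -(pmulr_lge0 _ v_gt0) -(qform_eigen va) qform_gram sqnorm_ge0.
Qed.

Lemma min_nz_eig_gram_ge0 : 0 <= min_nz_eig (C^T *m C).
Proof.
set E := [set a | eigenvalue (C^T *m C) a /\ a != 0]%classic.
have [[a Ea]|E0] := pselect (E !=set0)%classic.
  by apply: lb_le_inf => [|b [/gram_eigenvalue_ge0]//]; exists a.
rewrite /min_nz_eig -/E (_ : E = set0) ?inf0 //.
by apply/seteqP; split => // a Ea; apply: E0; exists a.
Qed.

Lemma min_nz_eig_gram (r : 'rV[R]_p) : (r <= C)%MS -> r != 0 ->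
  0 < min_nz_eig (C^T *m C) /\ min_nz_eig (C^T *m C) * sqnorm r <= sqnorm (r *m C^T).
Proof.
move=> rC rnz; set G := C^T *m C.
pose S := [set qform G v v / sqnorm v
            | v in [set v : 'rV[R]_p | (v <= C)%MS && (v != 0)]]%classic.
have S_inf : has_inf S.
  split; first by exists (qform G r r / sqnorm r), r; rewrite //= rC.
  by exists 0 => _ [v _ <-]; rewrite divr_ge0 ?qform_gram ?sqnorm_ge0.
have rayleigh v : (v <= C)%MS -> inf S * sqnorm v <= qform G v v.
  move=> vC; have [->|vnz] := eqVneq v 0.
    by rewrite sqnorm0 mulr0 qform_gram mul0mx sqnorm0.
  rewrite -ler_pdivlMr ?sqnorm_gt0 //; apply: ge_inf; first exact: S_inf.2.
  by exists v; rewrite //= vC.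
have [w [wC wnz wP]] :
    exists w : 'rV[R]_p, [/\ (w <= C)%MS, w != 0 & w *m (G - (inf S)%:M) = 0].
  apply: rayleigh_inf0_kernel => [||v vC|e e_gt0].
  - by rewrite linearB /= tr_scalar_mx gram_sym.
  - by rewrite mulmxBr mul_mx_scalar addmx_sub ?eqmx_opp ?scalemx_sub // mulmxA submxMl.
  - by rewrite qformB qform_scalar subr_ge0 rayleigh.
  have [_ [v /andP [vC vnz] <-] lt_v] := inf_adherent e_gt0 S_inf.
  exists v; split; rewrite // qformB qform_scalar.
  by move: lt_v; rewrite ltr_pdivrMr ?sqnorm_gt0 // mulrDl; lra.
have inf_eig : eigenvalue G (inf S) := eigenvalue_kernel wnz wP.
have inf_gt0 : 0 < inf S.
  rewrite lt_def; apply/andP; split.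
    apply: contraNneq wnz => inf_eq0; apply/eqP/(sub_mulmx_tr_eq0 wC)/eqP.
    rewrite -sqnorm_eq0 -qform_gram /qform.
    move: wP; rewrite mulmxBr mul_mx_scalar inf_eq0 scale0r subr0 => ->.
    by rewrite mul0mx mxE.
  apply: lb_le_inf => [|_ [v _ <-]]; last by rewrite divr_ge0 ?qform_gram ?sqnorm_ge0.
  by exists (qform G r r / sqnorm r), r; rewrite //= rC.
have -> : min_nz_eig G = inf S.
  apply/eqP; rewrite eq_le; apply/andP; split.
    apply: ge_inf; last by split; rewrite ?gt_eqF.
    by exists 0 => a [/gram_eigenvalue_ge0].
  apply: lb_le_inf => [|a [/eigenvalueP [v va vnz] a_neq0]].
    by exists (inf S); split; rewrite ?gt_eqF.
  have v_gt0 : 0 < sqnorm v by rewrite sqnorm_gt0.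
  by rewrite -(ler_pM2r v_gt0) -(qform_eigen va) rayleigh // (sub_gram_eigen a_neq0 va).
by split => //; rewrite -qform_gram rayleigh.
Qed.

End Gram.

Lemma sqnorm_range_le_div_min_nz_eig p q (A : 'M[R]_(p, q)) (w : 'cV[R]_q) W :
  sqnorm (A^T *m (A *m w)) <= W -> sqnorm (A *m w) <= W / min_nz_eig (A *m A^T).
Proof.
move=> le_W.
have gramE : A^T^T *m A^T = A *m A^T by rewrite trmxK.
have [Aw0|Awnz] := eqVneq (A *m w) 0.
  rewrite Aw0 sqnorm0 divr_ge0 ?(le_trans (sqnorm_ge0 _) le_W) //.
  by rewrite -gramE min_nz_eig_gram_ge0.
have rC : ((A *m w)^T <= A^T)%MS by rewrite trmx_mul submxMl.
have [] := min_nz_eig_gram rC; first by rewrite trmx_eq0.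
have -> : (A *m w)^T *m A^T^T = (A^T *m (A *m w))^T by rewrite [RHS]trmx_mul.
rewrite gramE !sqnorm_tr => s_gt0 s_le.
by rewrite ler_pdivlMr // mulrC (le_trans s_le).
Qed.

End QuadraticForm.

Section FlexPDG.
Variable R : realType.

Lemma sqr_sub_le_lipschitz (h : R -> R) (L x y : R) :
  (forall z, derivable h z 1) -> (forall z, `|derive1 h z| <= L) ->
  (h x - h y) ^+ 2 <= L ^+ 2 * (x - y) ^+ 2.
Proof.
move=> h_der h'_le; wlog yx : x y / y < x.
  move=> gen; have [xy|yx|->] := ltgtP x y; last by rewrite !subrr expr0n mulr0.
    by rewrite -sqrrN opprB -(sqrrN (x - y)) opprB gen.
  exact: gen.
have h_is_derive (z : R) : is_derive z 1 h (derive1 h z).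
  by rewrite derive1E; apply: derivableP.
have [c _ ->] := MVT yx (fun z _ => h_is_derive z)
  (derivable_within_continuous (fun z _ => h_der z)).
rewrite exprMn ler_wpM2r ?sqr_ge0 // -(real_normK (num_real (derive1 h c))).
by have := h'_le c; have := normr_ge0 (derive1 h c); nra.
Qed.

Lemma sqnorm_grad_sub_le n (f : 'I_n -> R -> R) (L : R) (x y : 'cV[R]_n) :
  (forall i z, derivable (derive1 (f i)) z 1) ->
  (forall i z, `|derive1 (derive1 (f i)) z| <= L) ->
  sqnorm (grad f x - grad f y) <= L ^+ 2 * sqnorm (x - y).
Proof.
move=> f'_der f''_le; rewrite !sqnorm_col mulr_sumr; apply: ler_sum => i _.
by rewrite !mxE; apply: sqr_sub_le_lipschitz.
Qed.

Lemma flex_outer_dual_range n eps (f : 'I_n -> R -> R) (A : 'M[R]_(eps, n)) B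
    alpha beta T x0 k :
  exists w, (flex_outer f A B alpha beta T x0 k).2 = A *m w.
Proof.
elim: k => [|k [w IH]] /=; first by exists 0; rewrite mulmx0.
set x := flex_inner _ _ _ _ _ _ _.
by exists (w + beta *: x); rewrite IH mulmxDr scalemxAr.
Qed.

Lemma dual_residualE n eps (A : 'M[R]_(eps, n)) (B : 'M[R]_n) (alpha beta : R)
    (xk xT1 xT xs g1 gT gs : 'cV[R]_n) (lk ls : 'cV[R]_eps) :
  alpha != 0 -> xT = xT1 - alpha *: g1 - alpha *: (A^T *m lk) - alpha *: (B *m xk) ->
  A *m xs = 0 -> B *m xs = 0 -> A^T *m ls = - gs ->
  A^T *m (lk + beta *: (A *m xT) - ls)
  = (- (alpha^-1 *: (xT - xT1)) + (gT - g1))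
    + (beta *: (A^T *m A *m (xT - xs)) - (gT - gs)) - B *m (xk - xs).
Proof.
move=> alpha_neq0 step Axs Bxs kkt.
rewrite mulmxBr mulmxDr -scalemxAr kkt !mulmxBr -(mulmxA A^T A xs) Axs Bxs.
rewrite mulmx0 !subr0 mulmxA.
move: (A^T *m lk) (A^T *m A *m xT) (B *m xk) step => P1 P2 P4 ->.
by apply/colP => i; rewrite !mxE; field.
Qed.

Section DualError.
Variables (n eps : nat) (f : 'I_n -> R -> R) (L : R).
Variables (A : 'M[R]_(eps, n)) (B : 'M[R]_n) (xs : 'cV[R]_n) (ls : 'cV[R]_eps).
Hypotheses (f'_der : forall i z, derivable (derive1 (f i)) z 1)
  (f''_le : forall i z, `|derive1 (derive1 (f i)) z| <= L).
Hypotheses (B_sym : B^T = B) (B_psd : forall u, 0 <= qform B u u).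
Hypotheses (Axs : A *m xs = 0) (Bxs : B *m xs = 0) (kkt : A^T *m ls = - grad f xs).
Variables (alpha beta db cb gb eb : R) (xk xT1 xT : 'cV[R]_n) (lk : 'cV[R]_eps).
Hypotheses (alpha_neq0 : alpha != 0)
  (step : xT = xT1 - alpha *: grad f xT1 - alpha *: (A^T *m lk) - alpha *: (B *m xk)).
Hypotheses (db_gt1 : 1 < db) (cb_gt1 : 1 < cb) (gb_gt1 : 1 < gb) (eb_gt1 : 1 < eb).

Lemma dual_error_sqnorm_le wl ws : lk = A *m wl -> ls = A *m ws ->
  sqnorm (lk + beta *: (A *m xT) - ls) <=
    db * cb / (alpha ^+ 2 * min_nz_eig (A *m A^T))
      * (gb + gb * alpha ^+ 2 * L ^+ 2 / (gb - 1)) * sqnorm (xT - xT1)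
  + db * cb / (min_nz_eig (A *m A^T) * (cb - 1))
      * (eb * beta ^+ 2 * max_eig (A^T *m A) ^+ 2 + eb * L ^+ 2 / (eb - 1))
      * sqnorm (xT - xs)
  + db * max_eig B ^+ 2 / (min_nz_eig (A *m A^T) * (db - 1)) * sqnorm (xk - xs).
Proof.
move=> lk_range ls_range; set s := min_nz_eig _.
have dual_range : lk + beta *: (A *m xT) - ls = A *m (wl + beta *: xT - ws).
  by rewrite lk_range ls_range mulmxBr mulmxDr scalemxAr.
have t1_le : sqnorm (- (alpha^-1 *: (xT - xT1))) <= alpha^-1 ^+ 2 * sqnorm (xT - xT1).
  by rewrite sqnormN sqnormZ.
have t2_le := sqnorm_grad_sub_le xT xT1 f'_der f''_le.
have t3_le : sqnorm (- (grad f xT - grad f xs)) <= L ^+ 2 * sqnorm (xT - xs).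
  by rewrite sqnormN sqnorm_grad_sub_le.
have t4_le : sqnorm (beta *: (A^T *m A *m (xT - xs)))
             <= beta ^+ 2 * (max_eig (A^T *m A) ^+ 2 * sqnorm (xT - xs)).
  rewrite sqnormZ ler_wpM2l ?sqr_ge0 ?sqnorm_mulmx_col_le_max_eig ?gram_sym //.
  by move=> u; rewrite qform_gram sqnorm_ge0.
have t5_le : sqnorm (- (B *m (xk - xs))) <= max_eig B ^+ 2 * sqnorm (xk - xs).
  by rewrite sqnormN sqnorm_mulmx_col_le_max_eig.
have := sqnormD_le db_gt1 (sqnormD_le cb_gt1 (sqnormD_le gb_gt1 t1_le t2_le)
                                             (sqnormD_le eb_gt1 t4_le t3_le)) t5_le.
rewrite -(dual_residualE beta _ alpha_neq0 step Axs Bxs kkt) dual_range.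
move=> /sqnorm_range_le_div_min_nz_eig; rewrite -dual_range -/s => /le_trans; apply.
(* [s] may be 0; with [s^-1] as an atom the identity needs no [s != 0]. *)
rewrite !invfM; set si := s^-1.
rewrite le_eqVlt; apply/orP; left; apply/eqP; field.
by rewrite alpha_neq0 !subr_eq0 !gt_eqF.
Qed.

End DualError.

End FlexPDG.

Theorem lemma3p11 (R : realType) (n eps : nat)
  (ends : 'I_eps -> 'I_n * 'I_n)
  (* simple undirected graph: no self-loops, each edge listed once *)
  (Hloop : forall e, (ends e).1 != (ends e).2)
  (Hsimple : forall e e', (ends e == ends e') || (ends e == ((ends e').2, (ends e').1)) -> e = e')
  (* connected *)
  (Hconn : forall i j, connect (adj ends) i j)
  (f : 'I_n -> R -> R) (m L : R) (Hm : 0 < m) (HmL : m <= L)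
  (Hd1 : forall i x, derivable (f i) x 1)
  (Hd2 : forall i x, derivable (derive1 (f i)) x 1)
  (Hf2 : forall i x, m <= derive1 (derive1 (f i)) x <= L)
  (B : 'M[R]_n)
  (HBsym : B^T = B)
  (HBpsd : forall v : 'cV[R]_n, 0 <= (v^T *m B *m v) 0 0)
  (HBker : forall v : 'cV[R]_n, (B *m v == 0) = (incidence R ends *m v == 0))
  (HBedge : forall i j, i != j -> B i j != 0 -> adj ends i j)
  (HBrho : max_eig B < m)
  (xs : 'cV[R]_n) (ls : 'cV[R]_eps)
  (Hxs_feas : incidence R ends *m xs = 0)
  (Hxs_min : forall y : 'cV[R]_n, incidence R ends *m y = 0 -> fsum f xs <= fsum f y)
  (Hxs_uniq : forall y : 'cV[R]_n, incidence R ends *m y = 0 -> fsum f y <= fsum f xs -> y = xs)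
  (Hkkt : grad f xs + (incidence R ends)^T *m ls = 0)
  (HBxs : B *m xs = 0)
  (Hls_col : exists w : 'cV[R]_n, ls = incidence R ends *m w)
  (alpha beta : R) (Halpha : 0 < alpha) (Hbeta : 0 < beta)
  (T : nat) (HT : (1 <= T)%N) (x0 : 'cV[R]_n)
  (db cb gb eb : R) (Hdb : 1 < db) (Hcb : 1 < cb) (Hgb : 1 < gb) (Heb : 1 < eb)
  (k : nat) :
  let A := incidence R ends in
  let xk := (flex_outer f A B alpha beta T x0 k).1 in
  let lk := (flex_outer f A B alpha beta T x0 k).2 in
  let lk1 := (flex_outer f A B alpha beta T x0 k.+1).2 in
  let xT := flex_inner f A B alpha xk lk T in
  let xT1 := flex_inner f A B alpha xk lk T.-1 in
  let s := min_nz_eig (A *m A^T) in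
  enorm (lk1 - ls) ^+ 2 <=
    db * cb / (alpha ^+ 2 * s) * (gb + gb * alpha ^+ 2 * L ^+ 2 / (gb - 1))
      * enorm (xT - xT1) ^+ 2
  + db * cb / (s * (cb - 1)) * (eb * beta ^+ 2 * max_eig (A^T *m A) ^+ 2 + eb * L ^+ 2 / (eb - 1))
      * enorm (xT - xs) ^+ 2
  + db * max_eig B ^+ 2 / (s * (db - 1)) * enorm (xk - xs) ^+ 2.
Proof.
cbv zeta.
set A := incidence R ends.
set xk := (flex_outer _ _ _ _ _ _ _ k).1.
set lk := (flex_outer _ _ _ _ _ _ _ k).2.
set xT := flex_inner _ _ _ _ xk lk T.
set xT1 := flex_inner _ _ _ _ xk lk T.-1.
have f''_le i z : `|derive1 (derive1 (f i)) z| <= L.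
  by have /andP [mf fL] := Hf2 i z; rewrite ger0_norm // (le_trans (ltW Hm) mf).
have B_psd u : 0 <= qform B u u by have := HBpsd u^T; rewrite trmxK.
have kkt : A^T *m ls = - grad f xs by apply/eqP; rewrite -addr_eq0 addrC Hkkt.
have xT_step : xT = xT1 - alpha *: grad f xT1 - alpha *: (A^T *m lk) - alpha *: (B *m xk).
  by rewrite /xT /xT1 -[in LHS](prednK HT).
have [wl lk_range] : exists w, lk = A *m w := flex_outer_dual_range _ _ _ _ _ _ _ _.
have [ws ls_range] := Hls_col.
rewrite !enorm_sqr.
exact: (dual_error_sqnorm_le Hd2 f''_le HBsym B_psd Hxs_feas HBxs kkt beta
  (lt0r_neq0 Halpha) xT_step Hdb Hcb Hgb Heb lk_range ls_range).
Qed.
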